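(* Let $S_{(1,1)}(x)=\sum_{p\ge1}\binom{2p}{p}x^{2p}$, $C^\bullet_{(1,1)}(x)=\sum_{n\ge1}\varphi(n)S_{(1,1)}(x^n)$ and $0<x<1/2$. Consider the procedure: draw $N\in\mathbb{N}^*$ with $\mathbb{P}(N=n)=\varphi(n)S_{(1,1)}(x^n)/C^\bullet_{(1,1)}(x)$; given $N=n$, draw a nonempty $(1,1)$-balanced word $w$ with probability $x^{n|w|}/S_{(1,1)}(x^n)$; output the necklace of $w^n$. Then each $(1,1)$-balanced necklace $c$ is output with probability $|c|\,x^{|c|}/C^\bullet_{(1,1)}(x)$; consequently, pointing the output at a uniformly random position in $\{1,\dots,|c|\}$ yields a Boltzmann sampler with parameter $x$ for $\Theta Cyc_{(1,1)}$. *)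

From Stdlib Require Import Reals List Arith Bool ClassicalEpsilon.
Import ListNotations.
Open Scope R_scope.

Definition series_value (f : nat -> R) : R :=
  epsilon (inhabits 0%R) (fun l => infinite_sum f l).

Definition S11 (x : R) : R :=
  series_value (fun p => C (2 * S p) (S p) * x ^ (2 * S p)).

Definition phi (n : nat) : nat :=
  length (filter (fun k => Nat.eqb (Nat.gcd k n) 1) (seq 1 n)).

Definition Cbullet (x : R) : R :=
  series_value (fun n => INR (phi (S n)) * S11 (x ^ S n)).

(* Words over the alphabet {a,b}, encoded as {true,false}. *)
Definition word := list bool.

Fixpoint words (k : nat) : list word :=
  match k with
  | O => [ [] ]
  | S k' => flat_map (fun w => [true :: w; false :: w]) (words k')
  end.

Definition nb (b : bool) (w : word) : nat :=
  length (filter (fun y => Bool.eqb y b) w).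

Definition balancedb (w : word) : bool :=
  negb (Nat.eqb (length w) 0) && Nat.eqb (nb true w) (nb false w).

Definition rotb (u v : word) : bool :=
  existsb (fun k => if list_eq_dec Bool.bool_dec (skipn k u ++ firstn k u) v
                    then true else false)
          (seq 0 (S (length u))).

Definition wpow (w : word) (n : nat) : word := concat (repeat w n).

Definition P_N (x : R) (n : nat) : R :=
  INR (phi n) * S11 (x ^ n) / Cbullet x.

(* Only words of length <= |c|
   can contribute, so the sum is restricted to them. *)
Definition cond_prob (x : R) (n : nat) (c : word) : R :=
  fold_right Rplus 0
    (map (fun w => x ^ (n * length w) / S11 (x ^ n))
         (filter (fun w => balancedb w && rotb (wpow w n) c)
                 (flat_map words (seq 1 (length c))))).

From Stdlib Require Import Reals List Bool Lra Lia ClassicalEpsilon.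
From mathcomp Require all_boot cyclic.
Open Scope R_scope.

(* The S_{(1,1)}(x^n) cancel: every balanced w with w^n in the necklace of c has
   length |c|/n, so it contributes x^|c| / S_{(1,1)}(x^n), and the probability of c
   is x^|c| / C(x) * sum_n phi(n) r_n(c), where r_n(c) counts such w.  If d is the
   least rotation period of c, then w^n is a rotation of c exactly when n d divides
   |c|, and the possible w are then the prefixes of length |c|/n of the d distinct
   rotations of c.  Hence r_n(c) = d [n divides |c|/d] and
   sum_n phi(n) r_n(c) = d * sum_{n | |c|/d} phi(n) = |c|.  Pointing at one of the
   |c| positions divides this by |c|. *)

Definition necklace_roots (c : word) (n : nat) : list word :=
  filter (fun w => balancedb w && rotb (wpow w n) c)
         (flat_map words (seq 1 (length c))).

Module BalancedNecklaces.
Import all_boot cyclic.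
Set Implicit Arguments. Unset Strict Implicit.
Local Open Scope nat_scope.

Lemma lengthE (T : Type) (s : list T) : length s = size s.
Proof. by elim: s => //= x s ->. Qed.

Lemma appE (T : Type) (s1 s2 : list T) : List.app s1 s2 = s1 ++ s2.
Proof. by elim: s1 => //= x s ->. Qed.

Lemma filterE (T : Type) (p : T -> bool) (s : list T) : List.filter p s = filter p s.
Proof. by elim: s => //= x s ->. Qed.

Lemma existsbE (T : Type) (p : T -> bool) (s : list T) : List.existsb p s = has p s.
Proof. by elim: s => //= x s ->. Qed.

Lemma flat_mapE (T U : Type) (f : T -> list U) (s : list T) :
  flat_map f s = flatten (map f s).
Proof. by elim: s => //= x s ->; rewrite appE. Qed.

Lemma skipnE (T : Type) k (s : list T) : skipn k s = drop k s.
Proof. by elim: k s => [|k IH] [|x s] //=. Qed.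

Lemma firstnE (T : Type) k (s : list T) : firstn k s = take k s.
Proof. by elim: k s => [|k IH] [|x s] //=; rewrite IH. Qed.

Lemma seqE m n : List.seq m n = iota m n.
Proof. by elim: n m => //= n IH m; rewrite IH. Qed.

Lemma nbE b w : nb b w = count (fun y => Bool.eqb y b) w.
Proof. by rewrite /nb lengthE filterE size_filter. Qed.

Lemma balancedbE w : balancedb w = (0 < size w) && (nb true w == nb false w).
Proof.
rewrite /balancedb lengthE lt0n.
by do 2 case: PeanoNat.Nat.eqb_spec => [->|/eqP/negPf ->]; rewrite ?eqxx.
Qed.

Lemma rotbP u v : reflect (exists k, rot k u = v) (rotb u v).
Proof.
rewrite /rotb existsbE seqE lengthE.
apply: (iffP hasP) => [[k _]|[k <-]].
  by case: list_eq_dec => // <- _; exists k; rewrite skipnE firstnE appE.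
exists (minn k (size u)); first by rewrite mem_iota ltnS geq_minr.
rewrite skipnE firstnE appE -/(rot _ u) -rot_minn; by case: list_eq_dec.
Qed.

Lemma wordsS k : words k.+1 = [seq b :: w | w <- words k, b <- [:: true; false]].
Proof. by rewrite /= flat_mapE. Qed.

Lemma mem_words k w : (w \in words k) = (size w == k).
Proof.
elim: k w => [|k IH] w; first by case: w.
rewrite wordsS; apply/allpairsPdep/idP => [[w' [b [w'_k _ ->]]]|].
  by rewrite /= eqSS -IH.
by case: w => // b w /= size_w; exists w, b; rewrite IH; case: b.
Qed.

Lemma uniq_words k : uniq (words k).
Proof.
elim: k => // k IH; rewrite wordsS; apply: allpairs_uniq => //.
by move=> [w1 b1] [w2 b2] _ _ [-> ->].
Qed.

Lemma mem_flatten_words s w : (w \in flatten (map words s)) = (size w \in s).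
Proof. by elim: s => //= k s IH; rewrite mem_cat IH mem_words in_cons eq_sym. Qed.

Lemma uniq_flatten_words s : uniq s -> uniq (flatten (map words s)).
Proof.
elim: s => //= k s IH /andP [k_notin_s uniq_s]; rewrite cat_uniq uniq_words IH // andbT.
apply/hasPn => w; rewrite mem_flatten_words mem_words.
by apply: contraTN => /eqP ->.
Qed.

Lemma wpowS w n : wpow w n.+1 = w ++ wpow w n.
Proof. by rewrite /wpow /= appE. Qed.

Lemma size_wpow w n : size (wpow w n) = n * size w.
Proof. by elim: n => // n IH; rewrite wpowS size_cat IH mulSn. Qed.

Lemma count_wpow a w n : count a (wpow w n) = n * count a w.
Proof. by elim: n => // n IH; rewrite wpowS count_cat IH mulSn. Qed.

Lemma wpow_catC w n : wpow w n ++ w = w ++ wpow w n.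
Proof. by elim: n => [|n IH]; rewrite ?cats0 // wpowS -catA IH. Qed.

Lemma rot_wpow w n : rot (size w) (wpow w n) = wpow w n.
Proof. by case: n => // n; rewrite wpowS rot_size_cat wpow_catC. Qed.

Lemma take_wpow w n : 0 < n -> take (size w) (wpow w n) = w.
Proof. by case: n => // n _; rewrite wpowS take_size_cat. Qed.

Lemma commute_wpow k r u :
  size r = k * size u -> r ++ u = u ++ r -> r = wpow u k.
Proof.
elim: k r => [|k IH] r size_r ru_ur; first by case: r size_r ru_ur.
have le_u_r : size u <= size r by rewrite size_r mulSn leq_addr.
have take_r : take (size u) r = u.
  have := congr1 (take (size u)) ru_ur.
  by rewrite (take_size_cat _ (erefl (size u))) takel_cat.
rewrite -(cat_take_drop (size u) r) take_r wpowS; congr (_ ++ _); apply: IH.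
  by rewrite size_drop size_r mulSn addKn.
move: ru_ur; rewrite -{1 2}(cat_take_drop (size u) r) take_r -catA.
by move/(congr1 (drop (size u))); rewrite !drop_size_cat.
Qed.

Lemma rot_fixed_wpow n m v : size v = n * m -> rot m v = v -> v = wpow (take m v) n.
Proof.
case: n => [|n] size_v rot_v; first by case: v size_v {rot_v}.
have size_take : size (take m v) = m by rewrite size_takel // size_v mulSn leq_addr.
rewrite wpowS -{1}(cat_take_drop m v); congr (_ ++ _); apply: commute_wpow.
  by rewrite size_drop size_v size_take mulSn addKn.
by move: rot_v; rewrite /rot cat_take_drop.
Qed.

Section RotationPeriod.
Variables (T : eqType) (c : seq T).

Lemma rot_period_exists : exists k, (0 < k) && (rot k c == c).
Proof. by exists (size c).+1; rewrite rot_oversize ?eqxx. Qed.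

Definition rot_period := ex_minn rot_period_exists.

Lemma rot_period_spec :
  [/\ 0 < rot_period, rot rot_period c = c &
      forall k, 0 < k -> rot k c = c -> rot_period <= k].
Proof.
rewrite /rot_period; case: ex_minnP => d /andP [d_gt0 /eqP rot_d] d_min.
by split=> // k k_gt0 rot_k; apply: d_min; rewrite k_gt0 rot_k eqxx.
Qed.

Lemma rot_period_gt0 : 0 < rot_period. Proof. by case: rot_period_spec. Qed.

Lemma rot_period_min k : 0 < k -> rot k c = c -> rot_period <= k.
Proof. by case: rot_period_spec => _ _; apply. Qed.

Lemma rot_mul_period q : q * rot_period <= size c -> rot (q * rot_period) c = c.
Proof.
elim: q => [|q IH] le_qd_c; first exact: rot0.
have le_qd : q * rot_period <= size c.
  by apply: leq_trans le_qd_c; rewrite mulSn leq_addl.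
by rewrite mulSn rotD // IH //; case: rot_period_spec.
Qed.

Lemma rot_mod_period k : k <= size c -> rot k c = rot (k %% rot_period) c.
Proof.
move=> le_k_c; have k_eq := divn_eq k rot_period.
have le_qd_c : k %/ rot_period * rot_period <= size c.
  by apply: leq_trans le_k_c; rewrite {2}k_eq leq_addr.
by rewrite {1}k_eq addnC rotD ?rot_mul_period // addnC -k_eq.
Qed.

Lemma rot_eq_period_dvd k : k <= size c -> (rot k c == c) = (rot_period %| k).
Proof.
move=> le_k_c; apply/eqP/idP => [rot_k|/dvdnP [q k_eq]]; last first.
  by rewrite k_eq in le_k_c *; apply: rot_mul_period.
rewrite /dvdn; case: posnP => // k_mod_gt0.
have := rot_period_min k_mod_gt0; rewrite -rot_mod_period // => /(_ rot_k).
by rewrite leqNgt ltn_pmod // rot_period_gt0.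
Qed.

Lemma rot_period_dvd_size : rot_period %| size c.
Proof. by rewrite -rot_eq_period_dvd // rot_size. Qed.

Lemma rot_inj_period k k' : 0 < size c ->
  k < rot_period -> k' < rot_period -> rot k c = rot k' c -> k = k'.
Proof.
move=> c_gt0; wlog le_kk' : k k' / k <= k'.
  move=> W lt_k lt_k' eq_rot; case: (leqP k k') => [le|/ltnW le]; first exact: W.
  exact/esym/W.
move=> _ lt_k' eq_rot; apply/eqP; rewrite eqn_leq le_kk' leqNgt; apply/negP => lt_kk'.
have le_k'_c : k' <= size c.
  by apply: leq_trans (ltnW lt_k') (dvdn_leq c_gt0 rot_period_dvd_size).
have : rot (k' - k) c = c.
  by apply: (@rot_inj k); rewrite rot_rot -rotD subnK // ltnW.
move/(rot_period_min (k := k' - k)); rewrite subn_gt0 => /(_ lt_kk').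
by rewrite leqNgt (leq_ltn_trans (leq_subr _ _) lt_k').
Qed.

End RotationPeriod.

Section BalancedRoots.
Variables (c : word) (n : nat).
Hypotheses (c_gt0 : 0 < size c) (c_balanced : nb true c = nb false c) (n_gt0 : 0 < n).

Local Notation d := (rot_period c).
Local Notation m := (size c %/ n).

Definition root_candidates := flatten (map words (iota 1 (size c))).
Definition is_root w := balancedb w && rotb (wpow w n) c.
Definition has_roots := n * d %| size c.
Definition root_set := [seq take m (rot k c) | k <- iota 0 d].

Lemma mem_root_candidates w : (w \in root_candidates) = (0 < size w <= size c).
Proof. by rewrite mem_flatten_words mem_iota add1n ltnS. Qed.

Lemma rot_wpow_take k : has_roots -> rot k c = wpow (take m (rot k c)) n.
Proof.
move=> nd_dvd_c.
have n_dvd_c : n %| size c := dvdn_trans (dvdn_mulr _ (dvdnn n)) nd_dvd_c.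
have size_c : size c = n * m by rewrite mulnC divnK.
have rot_m : rot m c = c.
  apply/eqP; rewrite rot_eq_period_dvd; last by rewrite {2}size_c leq_pmull.
  by rewrite -(dvdn_pmul2l n_gt0) -size_c.
by apply: rot_fixed_wpow; rewrite ?size_rot // rot_rot rot_m.
Qed.

Lemma root_in_root_set w :
  w \in root_candidates -> is_root w -> has_roots && (w \in root_set).
Proof.
rewrite mem_root_candidates => /andP [_ le_w_c] /andP [_ /rotbP [j rot_j]].
have size_c : size c = n * size w by rewrite -rot_j size_rot size_wpow.
have rot_w : rot (size w) c = c by rewrite -rot_j rot_rot rot_wpow.
have d_dvd_w : d %| size w by rewrite -rot_eq_period_dvd // rot_w.
rewrite /has_roots {1}size_c dvdn_pmul2l // d_dvd_w.
apply/mapP; exists ((size c - j) %% d).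
  by rewrite mem_iota ltn_pmod // rot_period_gt0.
have wpow_w : wpow w n = rot (size c - j) c by rewrite -[wpow w n](rotK j) rot_j.
by rewrite -rot_mod_period ?leq_subr // -wpow_w size_c mulKn // take_wpow.
Qed.

Lemma root_set_is_root k : has_roots -> is_root (take m (rot k c)).
Proof.
move=> roots; set w := take m (rot k c).
have rot_k : rot k c = wpow w n := rot_wpow_take k roots.
have nb_w b : n * nb b w = nb b c.
  by rewrite !nbE -count_wpow -rot_k; apply/permP; rewrite perm_rot.
have w_gt0 : 0 < size w by rewrite -(ltn_pmul2l n_gt0) muln0 -size_wpow -rot_k size_rot.
rewrite /is_root balancedbE w_gt0 -(eqn_pmul2l n_gt0) !nb_w.
rewrite c_balanced eqxx; apply/rotbP; exists (size c - k).
by rewrite -rot_k -[in RHS](rotK k c) /rotr size_rot.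
Qed.

Lemma uniq_root_set : has_roots -> uniq root_set.
Proof.
move=> roots; rewrite map_inj_in_uniq ?iota_uniq // => k k'.
rewrite !mem_iota => /= lt_k lt_k' eq_take.
apply: (rot_inj_period c_gt0 lt_k lt_k').
by rewrite (rot_wpow_take k roots) eq_take -rot_wpow_take.
Qed.

Lemma size_roots :
  size (filter is_root root_candidates) = if has_roots then d else 0.
Proof.
case: ifP => roots; last first.
  apply/eqP; rewrite size_filter -leqn0 leqNgt -has_count.
  apply/negP => /hasP [w cand_w root_w].
  by have := root_in_root_set cand_w root_w; rewrite roots.
rewrite -(size_iota 0 d) -(size_map (fun k => take m (rot k c))).
apply/perm_size/uniq_perm; rewrite ?filter_uniq ?uniq_flatten_words ?iota_uniq //.
  exact: uniq_root_set.
move=> w; rewrite mem_filter; apply/idP/idP => [|/mapP [k _ ->]].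
  by rewrite andbC => /andP [cand_w /(root_in_root_set cand_w) /andP []].
have root_k := root_set_is_root k roots; have /andP [balanced_k _] := root_k.
move: balanced_k; rewrite balancedbE root_k mem_root_candidates size_take_min size_rot.
by rewrite geq_minr andbT => /andP [].
Qed.

End BalancedRoots.

Lemma gcdE a b : Nat.gcd a b = gcdn a b.
Proof.
have dvdE p q : Nat.divide p q <-> p %| q.
  by split=> [[r ->]|/dvdnP [r ->]]; [rewrite dvdn_mull | exists r].
apply/eqP; rewrite eqn_dvd dvdn_gcd -andbA; apply/and3P; split; apply/dvdE.
- exact: PeanoNat.Nat.gcd_divide_l.
- exact: PeanoNat.Nat.gcd_divide_r.
- by apply: PeanoNat.Nat.gcd_greatest; apply/dvdE; [apply: dvdn_gcdl | apply: dvdn_gcdr].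
Qed.

(* [phi] counts 1 <= k <= n, [totient] counts 0 <= k < n; k = n and k = 0 agree. *)
Lemma phiE n : phi n = totient n.
Proof.
rewrite /phi lengthE filterE seqE size_filter totient_count_coprime /index_iota subn0.
have -> : \sum_(d <- iota 0 n) coprime n d = count (coprime n) (iota 0 n).
  by rewrite -sum1_count [RHS]big_mkcond; apply: eq_bigr => d _; case: coprime.
rewrite (@eq_count _ _ (coprime n)) => [|k]; last first.
  by rewrite /= gcdE gcdnC /coprime; case: PeanoNat.Nat.eqb_spec => [->|/eqP/negPf].
apply: (@addnI (coprime n 0)).
rewrite -[LHS]/(count (coprime n) (iota 0 n.+1)) -addn1 iotaD count_cat /= addn0 addnC.
by rewrite /coprime gcdn0 gcdnn.
Qed.

Lemma sum_totient_dvd_prefix M N : 0 < M -> M <= N ->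
  \sum_(0 <= k < N) (k.+1 %| M) * totient k.+1 = M.
Proof.
move=> M_gt0 le_MN.
have -> : \sum_(0 <= k < N) (k.+1 %| M) * totient k.+1
        = \sum_(0 <= k < N.+1) (k %| M) * totient k.
  by rewrite big_nat_recl // dvd0n eqn0Ngt M_gt0.
rewrite (big_cat_nat _ (n := M.+1)) //=.
rewrite [X in _ + X]big1_seq ?addn0 => [|k /=]; last first.
  rewrite mem_index_iota => /andP [lt_Mk _]; suff -> : (k %| M) = false by [].
  by apply: contraTF lt_Mk => /(dvdn_leq M_gt0); rewrite leqNgt.
rewrite big_mkord -[RHS](sum_totient_dvd M) [RHS]big_mkcond /=.
by apply: eq_bigr => k _; case: ifP => _; rewrite ?mul1n ?mul0n.
Qed.

Lemma sum_phi_size_roots c : 0 < size c -> nb true c = nb false c ->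
  \sum_(0 <= k < size c) phi k.+1 * size (filter (is_root c k.+1) (root_candidates c))
  = size c.
Proof.
move=> c_gt0 c_balanced; set d := rot_period c.
have size_c : size c = size c %/ d * d by rewrite divnK // rot_period_dvd_size.
have M_gt0 : 0 < size c %/ d by move: c_gt0; rewrite {1}size_c muln_gt0 => /andP [].
rewrite [in RHS]size_c -(sum_totient_dvd_prefix M_gt0 (leq_div _ _)) big_distrl /=.
apply: eq_bigr => k _; rewrite size_roots // phiE /has_roots {1}size_c.
by rewrite dvdn_pmul2r ?rot_period_gt0 //; case: (_ %| _); rewrite ?muln0 ?mul1n.
Qed.

Lemma sum_f_R0_INR (f : nat -> nat) N :
  sum_f_R0 (fun k => INR (f k)) N = INR (\sum_(0 <= k < N.+1) f k).
Proof.
elim: N => [|N IH]; first by rewrite big_nat1.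
by rewrite tech5 IH [in RHS]big_nat_recr //= plus_INR.
Qed.

Lemma necklace_rootsE c n :
  necklace_roots c n = filter (is_root c n) (root_candidates c).
Proof. by rewrite /necklace_roots filterE flat_mapE seqE lengthE. Qed.

Lemma length_necklace_root c n w :
  List.In w (necklace_roots c n) -> (n * length w)%coq_nat = length c.
Proof.
case/List.filter_In => _ /andP [_ /rotbP [j <-]].
by rewrite multE !lengthE size_rot size_wpow.
Qed.

Lemma sum_phi_necklace_roots c : balancedb c ->
  sum_f_R0 (fun k => INR (phi (S k) * length (necklace_roots c (S k)))%coq_nat)
           (length c).-1
  = INR (length c).
Proof.
rewrite balancedbE => /andP [c_gt0 /eqP c_balanced].
rewrite sum_f_R0_INR lengthE prednK //.
rewrite -[in RHS](sum_phi_size_roots c_gt0 c_balanced).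
by congr INR; apply: eq_bigr => k _; rewrite necklace_rootsE lengthE multE.
Qed.

End BalancedNecklaces.

Lemma series_value_unique f l : infinite_sum f l -> series_value f = l.
Proof.
  intro Hl. apply (uniqueness_sum f); [unfold series_value | exact Hl].
  apply epsilon_spec. exists l. exact Hl.
Qed.

Lemma infinite_sum_ext f g l :
  (forall k, f k = g k) -> infinite_sum f l -> infinite_sum g l.
Proof.
  intros Hfg Hf eps Heps. destruct (Hf eps Heps) as [N HN]. exists N.
  intros n Hn. rewrite <- (sum_eq f g n) by (intros; apply Hfg). exact (HN n Hn).
Qed.

Lemma infinite_sum_scal_r f l a :
  infinite_sum f l -> infinite_sum (fun k => f k * a) (l * a).
Proof.
  intro Hf. apply (CV_mult _ (fun _ => a) _ a) in Hf.
  2:{ intros eps Heps. exists 0%nat. intros n _. unfold Rdist.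
      rewrite Rminus_diag, Rabs_R0. exact Heps. }
  intros eps Heps. destruct (Hf eps Heps) as [N HN]. exists N.
  intros n Hn. rewrite <- scal_sum, Rmult_comm. exact (HN n Hn).
Qed.

Lemma infinite_sum_finite f N :
  (forall k, (N < k)%nat -> f k = 0) -> infinite_sum f (sum_f_R0 f N).
Proof.
  intros Hzero eps Heps. exists N. intros n Hn.
  replace (sum_f_R0 f n) with (sum_f_R0 f N).
  - unfold Rdist. rewrite Rminus_diag, Rabs_R0. exact Heps.
  - induction Hn as [|n Hn IH]; [reflexivity|].
    rewrite tech5, <- IH, Hzero by lia. ring.
Qed.

Lemma sum_f_R0_ge_term f N k :
  (forall i, 0 <= f i) -> (k <= N)%nat -> f k <= sum_f_R0 f N.
Proof.
  intros Hf Hk. induction Hk as [|N Hk IH].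
  - destruct k; [simpl; lra|]. rewrite tech5.
    pose proof (cond_pos_sum f k Hf). lra.
  - rewrite tech5. pose proof (Hf (S N)). lra.
Qed.

Lemma C_pos n k : 0 < C n k.
Proof.
  unfold C. apply Rdiv_lt_0_compat; [apply INR_fact_lt_0|].
  apply Rmult_lt_0_compat; apply INR_fact_lt_0.
Qed.

Lemma C_le_pow2 n k : (k <= n)%nat -> C n k <= 2 ^ n.
Proof.
  intro Hk. replace 2 with (1 + 1) by ring. rewrite binomial.
  replace (C n k) with (C n k * 1 ^ k * 1 ^ (n - k)) by (rewrite !pow1; ring).
  apply (sum_f_R0_ge_term (fun i => C n i * 1 ^ i * 1 ^ (n - i))); [|exact Hk].
  intro i. rewrite !pow1. pose proof (C_pos n i). lra.
Qed.

(* For y < 1/2 the terms are dominated by the geometric sequence (4 y^2)^p. *)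
Lemma S11_pos y : 0 < y < 1/2 -> 0 < S11 y.
Proof.
  intros [Hy0 Hy1].
  set (g := fun p => C (2 * S p) (S p) * y ^ (2 * S p)).
  set (q := 4 * y ^ 2).
  assert (Hq : 0 <= q < 1) by (unfold q; split; nra).
  assert (Hg : forall p, 0 <= g p <= 1 * q ^ p).
  { intro p. unfold g. split.
    - apply Rmult_le_pos; [apply Rlt_le, C_pos | apply pow_le; lra].
    - apply Rle_trans with (2 ^ (2 * S p) * y ^ (2 * S p)).
      + apply Rmult_le_compat_r; [apply pow_le; lra|]. apply C_le_pow2. lia.
      + rewrite <- Rpow_mult_distr, pow_mult.
        replace ((2 * y) ^ 2) with q by (unfold q; ring).
        simpl. pose proof (pow_le q p (proj1 Hq)). nra. }
  assert (Hgeo : {l | Un_cv (fun N => sum_f_R0 (fun p => 1 * q ^ p) N) l}).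
  { exists (/ (1 - q)). apply GP_infinite. rewrite Rabs_right; lra. }
  destruct (Rseries_CV_comp g _ Hg Hgeo) as [l Hl].
  unfold S11. fold g. rewrite (series_value_unique g l Hl).
  apply Rlt_le_trans with (sum_f_R0 g 0).
  - simpl. unfold g. apply Rmult_lt_0_compat; [apply C_pos | apply pow_lt; lra].
  - apply (growing_ineq _ l); [|exact Hl].
    intro n. rewrite tech5. pose proof (Hg (S n)). lra.
Qed.

Lemma fold_right_Rplus_map_const {A : Type} (g : A -> R) a l :
  (forall w, In w l -> g w = a) -> fold_right Rplus 0 (map g l) = INR (length l) * a.
Proof.
  induction l as [|w l IH]; intro Hg; cbn [fold_right map length]; [simpl; ring|].
  rewrite Hg, IH by (auto with datatypes). rewrite S_INR. ring.
Qed.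

Lemma P_N_cond_prob x n c : 0 < x < 1/2 -> (0 < n)%nat ->
  P_N x n * cond_prob x n c =
  INR (phi n * length (necklace_roots c n)) * (x ^ length c / Cbullet x).
Proof.
  intros Hx Hn. unfold P_N, cond_prob.
  change (filter _ (flat_map words (seq 1 (length c)))) with (necklace_roots c n).
  rewrite (fold_right_Rplus_map_const (A := word) _ (x ^ length c / S11 (x ^ n))).
  2:{ intros w Hw. apply BalancedNecklaces.length_necklace_root in Hw. now rewrite Hw. }
  assert (Hxn : 0 < x ^ n < 1/2).
  { destruct n as [|k]; [lia|]. split; [apply pow_lt; lra|]. simpl.
    pose proof (pow_incr x 1 k ltac:(lra)) as Hxk. rewrite pow1 in Hxk. nra. }
  pose proof (S11_pos _ Hxn) as HS. rewrite mult_INR. unfold Rdiv.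
  generalize (/ Cbullet x). intro inv_C. field. lra.
Qed.

Lemma sum_phi_necklace_roots_series c : balancedb c = true ->
  infinite_sum (fun k => INR (phi (S k) * length (necklace_roots c (S k))))
               (INR (length c)).
Proof.
  intro hc. rewrite <- (BalancedNecklaces.sum_phi_necklace_roots hc).
  apply infinite_sum_finite. intros k Hk.
  destruct (necklace_roots c (S k)) as [|w l] eqn:E.
  - rewrite Nat.mul_0_r. reflexivity.
  - assert (Hw : In w (necklace_roots c (S k))) by (rewrite E; left; reflexivity).
    apply BalancedNecklaces.length_necklace_root in Hw.
    apply andb_prop in hc as [Hc _]. apply negb_true_iff, Nat.eqb_neq in Hc.
    destruct (length w); nia.
Qed.

Theorem mainTheorem5 (x : R) (hx : 0 < x < 1/2) (c : word)
  (hc : balancedb c = true) :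
  infinite_sum (fun k => P_N x (S k) * cond_prob x (S k) c)
               (INR (length c) * x ^ length c / Cbullet x)
  /\
  (forall i : nat, (1 <= i <= length c)%nat ->
     infinite_sum (fun k => P_N x (S k) * cond_prob x (S k) c / INR (length c))
                  (x ^ length c / Cbullet x)).
Proof.
  assert (Hterm : forall k, INR (phi (S k) * length (necklace_roots c (S k)))
                            * (x ^ length c / Cbullet x)
                            = P_N x (S k) * cond_prob x (S k) c).
  { intro k. symmetry. apply P_N_cond_prob; [exact hx | lia]. }
  pose proof (sum_phi_necklace_roots_series c hc) as Hsum.
  split.
  - replace (INR (length c) * x ^ length c / Cbullet x)
      with (INR (length c) * (x ^ length c / Cbullet x)) by (unfold Rdiv; ring).
    exact (infinite_sum_ext _ _ _ Hterm (infinite_sum_scal_r _ _ _ Hsum)).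
  - intros i Hi.
    replace (x ^ length c / Cbullet x)
      with (INR (length c) * (x ^ length c / Cbullet x * / INR (length c))).
    2:{ rewrite Rmult_comm, Rmult_assoc, Rinv_l, Rmult_1_r; [reflexivity|].
        apply not_0_INR. lia. }
    refine (infinite_sum_ext _ _ _ _ (infinite_sum_scal_r _ _ _ Hsum)).
    intro k. rewrite <- Hterm. unfold Rdiv. ring.
Qed.
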